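(* In the algebraic decision tree model, any algorithm that finds the elimination order of a set of $n$ growing disks in the plane, or of a set of $n$ growing squares in the plane, requires $\Omega(n\log n)$ time.
   Context: Growing prioritized disks: centers $p_1,\dots,p_n\in\mathbb{R}^2$ and growth rates $v_1,\dots,v_n>0$; at time $t\ge0$ disk $D_i$ is centered at $p_i$ with radius $tv_i$ (for squares: the axis-aligned square centered at $p_i$ with edge length $2v_it$). Smaller index means higher priority; $t(i,j)$ is the time at which objects $i$ and $j$ would first touch (for disks $|p_ip_j|/(v_i+v_j)$). Whenever objects $i<j$ touch at time $t(i,j)$ and neither has been removed before, object $j$ is removed at that time and object $i$ keeps growing. The elimination order is the sequence of objects sorted by the times at which they are removed (object $1$ is never removed). *)

From mathcomp Require Import all_boot all_order all_algebra.
From mathcomp Require Import reals.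
From mathcomp Require Import mpoly.
Import Order.TTheory GRing.Theory Num.Theory.

Set Implicit Arguments.
Unset Strict Implicit.
Unset Printing Implicit Defensive.

Local Open Scope ring_scope.

Section Elimination.
Variable R : realType.

(* Removal times live in R extended by +oo, encoded as option R (None = +oo,
   i.e. "never removed"). *)
Definition le_ext (a b : option R) : bool :=
  match a, b with
  | _, None => true
  | None, Some _ => false
  | Some x, Some y => x <= y
  end.

Definition min_ext (a b : option R) : option R :=
  if le_ext a b then a else b.

(* Objects are indexed 0,1,...,n-1; smaller index = higher priority.
   [t i j] is the time at which objects i and j would first touch.
   Given the removal times [s] of objects 0..j-1, object j is removed at the
   earliest time t(i,j) with i < j such that i has not been removed before
   t(i,j) (i.e. removal time of i >= t(i,j)); if there is none, never. *)
Definition next_removal (t : nat -> nat -> R) (s : seq (option R)) (j : nat)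
  : option R :=
  foldr (fun i acc =>
           if le_ext (Some (t i j)) (nth None s i)
           then min_ext (Some (t i j)) acc else acc)
        None (iota 0 j).

Fixpoint removal_times (t : nat -> nat -> R) (k : nat) : seq (option R) :=
  match k with
  | 0 => [::]
  | k'.+1 => let s := removal_times t k' in rcons s (next_removal t s k')
  end.

Definition removal_time (t : nat -> nat -> R) (n j : nat) : option R :=
  nth None (removal_times t n) j.

(* [s] is an elimination order of the n objects: the sequence of all removed
   objects, sorted by (nondecreasing) removal time; in case of ties any
   consistent order is accepted. *)
Definition is_elim_order (t : nat -> nat -> R) (n : nat) (s : seq nat) : bool :=
  perm_eq s [seq j <- iota 0 n | removal_time t n j != None] &&
  sorted (fun a b => le_ext (removal_time t n a) (removal_time t n b)) s.

Definition coord (m : nat) (x : 'I_m -> R) (k : nat) : R :=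
  match @insub nat (fun k => k < m)%N _ k with
  | Some i => x i
  | None => 0
  end.

Definition cx (n : nat) (x : 'I_(3 * n) -> R) (i : nat) : R := coord x (3 * i).
Definition cy (n : nat) (x : 'I_(3 * n) -> R) (i : nat) : R := coord x (3 * i + 1).
Definition rate (n : nat) (x : 'I_(3 * n) -> R) (i : nat) : R := coord x (3 * i + 2).

Definition disk_touch (n : nat) (x : 'I_(3 * n) -> R) (i j : nat) : R :=
  Num.sqrt ((cx x i - cx x j) ^+ 2 + (cy x i - cy x j) ^+ 2)
  / (rate x i + rate x j).

(* axis-aligned squares of edge 2 v_i t: touch when the L_infinity distance
   equals (v_i + v_j) t *)
Definition square_touch (n : nat) (x : 'I_(3 * n) -> R) (i j : nat) : R :=
  Num.max `|cx x i - cx x j| `|cy x i - cy x j| / (rate x i + rate x j).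

Inductive adt (m : nat) (O : Type) : Type :=
  | ALeaf of O
  | ANode of {mpoly R[m]} & adt m O & adt m O & adt m O.

Fixpoint adt_run (m : nat) (O : Type) (T : adt m O) (x : 'I_m -> R) : O :=
  match T with
  | ALeaf o => o
  | ANode p Tlt Teq Tgt =>
      let y := p.@[x] in
      if y < 0 then adt_run Tlt x
      else if y == 0 then adt_run Teq x
      else adt_run Tgt x
  end.

Fixpoint adt_depth (m : nat) (O : Type) (T : adt m O) : nat :=
  match T with
  | ALeaf _ => 0
  | ANode _ Tlt Teq Tgt =>
      (maxn (adt_depth Tlt) (maxn (adt_depth Teq) (adt_depth Tgt))).+1
  end.

(* all test polynomials have total degree at most d *)
Fixpoint adt_deg_le (m : nat) (O : Type) (d : nat) (T : adt m O) : bool :=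
  match T with
  | ALeaf _ => true
  | ANode p Tlt Teq Tgt =>
      [&& (msize p <= d.+1)%N, adt_deg_le d Tlt, adt_deg_le d Teq
        & adt_deg_le d Tgt]
  end.

Definition computes_elim_order (n : nat)
    (touch : ('I_(3 * n) -> R) -> nat -> nat -> R)
    (T : adt (3 * n) (seq nat)) : Prop :=
  forall x : 'I_(3 * n) -> R,
    (forall i, (i < n)%N -> 0 < rate x i) ->
    is_elim_order (touch x) n (adt_run T x).

Definition elim_order_lower_bound
    (touch : forall n : nat, ('I_(3 * n) -> R) -> nat -> nat -> R) : Prop :=
  forall d : nat,
  exists2 c : R, 0 < c &
  exists N : nat, forall n : nat, (N <= n)%N ->
    forall T : adt (3 * n) (seq nat),
      adt_deg_le d T -> computes_elim_order (@touch n) T ->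
      c * ((n * trunc_log 2 n)%N)%:R <= (adt_depth T)%:R.

End Elimination.

From Pilot Require Import Defs.
From mathcomp Require Import all_boot all_order all_algebra.
From mathcomp Require Import reals.
From mathcomp Require Import mpoly.
From mathcomp Require Import zify.
Import Order.TTheory GRing.Theory Num.Theory.

(* Put object 0 at the origin with growth rate 1, and objects 1..n on the
   positive x-axis at the distinct integer positions 1..n prescribed by a
   permutation, all with growth rate 1/(2(n+1)).  Two slow objects can touch
   only after time n+1, whereas object 0 reaches each of them before time n;
   so object 0 removes all the others, in the order of their positions, and
   the elimination order is the permutation itself.  A decision tree solving
   the problem thus has n! distinct outputs, hence at least n! leaves and
   depth at least log_3 n! = Omega(n log n).  Since the objects lie on a
   line, disks and squares have the same touching times. *)

Set Implicit Arguments.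
Unset Strict Implicit.
Unset Printing Implicit Defensive.

Lemma expn_le_fact_sqr m : (m ^ m <= m`! ^ 2)%N.
Proof.
(* Pair the factors of m`! with those of its reversal: i * (m + 1 - i) >= m. *)
rewrite fact_prod expnS expn1.
have rev_prod : (\prod_(1 <= i < m.+1) i = \prod_(1 <= i < m.+1) (m.+1 - i))%N.
  by rewrite big_nat_rev; apply: eq_big_nat => i /andP[? ?]; lia.
have -> : (m ^ m = \prod_(1 <= i < m.+1) m)%N by rewrite prod_nat_const_nat subn1.
rewrite {2}rev_prod -big_split /=.
rewrite big_seq [X in (_ <= X)%N]big_seq.
by apply: leq_prod => i; rewrite mem_index_iota => /andP[? ?]; nia.
Qed.

Lemma fact_le_exp3_trunc_log n h :
  (n`! <= 3 ^ h)%N -> ((trunc_log 2 n.+1).-1 * n <= 4 * h)%N.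
Proof.
move=> fact_le; have := @trunc_logP 2 n.+1 isT isT.
case: (trunc_log 2 n.+1) => [|k] //= pow_le; rewrite expnS in pow_le.
rewrite -(@leq_exp2l 2) // expnM.
apply: (@leq_trans (n ^ n)); first by rewrite leq_exp2r; lia.
apply: leq_trans (expn_le_fact_sqr n) _.
apply: (@leq_trans ((3 ^ h) ^ 2)); first by rewrite leq_sqr.
rewrite expnAC expnM.
by case: h {fact_le} => [|h] //; rewrite leq_exp2r.
Qed.

Section DecisionTreeLeaves.
Variables (R : realType) (m : nat) (O : eqType).

Fixpoint adt_leaves (T : adt R m O) : seq O :=
  match T with
  | ALeaf o => [:: o]
  | ANode _ Tlt Teq Tgt => adt_leaves Tlt ++ adt_leaves Teq ++ adt_leaves Tgt
  end.

Lemma size_adt_leaves (T : adt R m O) : (size (adt_leaves T) <= 3 ^ adt_depth T)%N.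
Proof.
elim: T => [o|p Tlt IHlt Teq IHeq Tgt IHgt] //=.
rewrite !size_cat expnS; set M := maxn _ _.
have exp_le d : (d <= M)%N -> (3 ^ d <= 3 ^ M)%N by move=> ?; rewrite leq_exp2l.
have := exp_le (adt_depth Tlt); have := exp_le (adt_depth Teq).
have := exp_le (adt_depth Tgt); rewrite /M; lia.
Qed.

Lemma adt_run_in_leaves (T : adt R m O) x : adt_run T x \in adt_leaves T.
Proof.
elim: T => [o|p Tlt IHlt Teq IHeq Tgt IHgt] /=; first exact: mem_head.
by case: ifP => _; [|case: ifP => _]; rewrite !mem_cat ?IHlt ?IHeq ?IHgt ?orbT.
Qed.

Lemma size_outputs_le_adt_depth (T : adt R m O) (S : seq O) :
  uniq S -> (forall o, o \in S -> exists x, adt_run T x = o) ->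
  (size S <= 3 ^ adt_depth T)%N.
Proof.
move=> S_uniq S_outputs; apply: leq_trans (size_adt_leaves T).
apply: uniq_leq_size S_uniq _ => o /S_outputs[x <-]; exact: adt_run_in_leaves.
Qed.

End DecisionTreeLeaves.

Local Open Scope ring_scope.

Section RemovalTimes.
Variables (R : realType) (t : nat -> nat -> R).

Lemma le_ext_trans : transitive (@le_ext R).
Proof. by move=> b a c; case: a b c => [a|] [b|] [c|] //=; apply: le_trans. Qed.

Lemma le_ext_anti (a b : option R) : le_ext a b -> le_ext b a -> a = b.
Proof. by case: a b => [a|] [b|] //= ab ba; congr Some; apply/eqP; rewrite eq_le ab. Qed.

Lemma next_removal_dominant (s : seq (option R)) (j : nat) :
  (0 < j)%N -> nth None s 0 = None ->
  (forall i, (0 < i < j)%N -> t 0 j <= t i j) ->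
  next_removal t s j = Some (t 0 j).
Proof.
case: j => // j _ s0_kept dominant; rewrite /next_removal.
set step := (X in foldr X); rewrite /= {1}/step s0_kept /= /min_ext.
suff -> : le_ext (Some (t 0 j.+1)) (foldr step None (iota 1 j)) by [].
have : all (fun i => t 0 j.+1 <= t i j.+1) (iota 1 j).
  by apply/allP => i; rewrite mem_iota => i_range; apply: dominant; lia.
elim: (iota 1 j) => //= i L IHL /andP[t0_le /IHL le_fold].
by rewrite /step; case: ifP => // _; rewrite /min_ext; case: ifP.
Qed.

Lemma removal_times_dominant n :
  (forall i j, (0 < i)%N -> (i < j < n)%N -> t 0 j <= t i j) ->
  removal_times t n = [seq if j == 0%N then None else Some (t 0 j) | j <- iota 0 n].
Proof.
elim: n => [|n IHn] dominant //; rewrite [removal_times _ _]/=.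
rewrite IHn => [|i j i_gt0 ij]; last by apply: dominant; lia.
rewrite -addn1 iotaD map_cat cats1 /=; congr rcons.
case: n {IHn} dominant => [|n] dominant //.
by apply: next_removal_dominant => // i i_range; apply: dominant; lia.
Qed.

Lemma removal_time_dominant n j :
  (forall i j, (0 < i)%N -> (i < j < n)%N -> t 0 j <= t i j) -> (j < n)%N ->
  removal_time t n j = if j == 0%N then None else Some (t 0 j).
Proof.
move=> dominant j_lt_n; rewrite /removal_time removal_times_dominant //.
by rewrite (nth_map 0%N) ?size_iota // nth_iota.
Qed.

Lemma elim_order_unique n o1 o2 :
  {in [seq j <- iota 0 n | removal_time t n j != None] &,
    injective (removal_time t n)} ->
  is_elim_order t n o1 -> is_elim_order t n o2 -> o1 = o2.
Proof.
move=> rt_inj /andP[perm1 sorted1] /andP[perm2 sorted2].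
have removed1 j : j \in o1 -> j \in [seq j <- iota 0 n | removal_time t n j != None].
  by rewrite (perm_mem perm1).
apply: (sorted_eq_in _ _ sorted1 sorted2).
- by move=> ? ? ? _ _ _; apply: le_ext_trans.
- move=> a b /removed1 a_rem /removed1 b_rem /andP[ab ba].
  by apply: rt_inj => //; apply: le_ext_anti.
- by rewrite (perm_trans perm1) // perm_sym.
Qed.

Lemma elim_order_dominant n s o :
  perm_eq s (iota 1 n) ->
  (forall i j, (0 < i)%N -> (i < j < n.+1)%N -> t 0 j <= t i j) ->
  sorted (fun a b => t 0 a <= t 0 b) s -> {in s &, injective (t 0)} ->
  is_elim_order t n.+1 o -> o = s.
Proof.
move=> s_perm dominant s_sorted t0_inj o_elim.
have rt_s j : j \in s -> removal_time t n.+1 j = Some (t 0 j).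
  rewrite (perm_mem s_perm) mem_iota => j_range.
  by rewrite removal_time_dominant ?ifN_eq //; lia.
have removed : [seq j <- iota 0 n.+1 | removal_time t n.+1 j != None] = iota 1 n.
  rewrite /= removal_time_dominant //= -[RHS]filter_predT.
  by apply: eq_in_filter => j; rewrite -(perm_mem s_perm) => /rt_s ->.
have s_elim : is_elim_order t n.+1 s.
  rewrite /is_elim_order removed s_perm /=.
  by apply: sub_in_sorted s_sorted => [a b /rt_s -> /rt_s ->|]; last exact: allss.
apply: elim_order_unique o_elim s_elim; rewrite removed => a b.
by rewrite -!(perm_mem s_perm) => a_s b_s; rewrite !rt_s // => -[]; apply: t0_inj.
Qed.

End RemovalTimes.

Lemma coordE (R : realType) m (x : 'I_m -> R) k (k_lt_m : (k < m)%N) :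
  Defs.coord x k = x (Ordinal k_lt_m).
Proof.
rewrite /Defs.coord; case: insubP => [u _ u_k|]; last by rewrite k_lt_m.
by congr x; apply: val_inj.
Qed.

Lemma dist_natr_ge1 (R : numDomainType) (p q : nat) :
  p != q -> 1 <= `|p%:R - q%:R : R|.
Proof.
case: (ltngtP p q) => [pq|pq|->]; rewrite ?eqxx // => _.
- by rewrite distrC -natrB ?(ltnW pq) // normr_nat ler1n subn_gt0.
- by rewrite -natrB ?(ltnW pq) // normr_nat ler1n subn_gt0.
Qed.

Lemma sorted_index (T : eqType) (s : seq T) :
  uniq s -> sorted (fun a b => (index a s <= index b s)%N) s.
Proof.
case: s => // x0 s' s_uniq; apply/(sortedP x0) => k k_lt.
by rewrite !index_uniq //; lia.
Qed.

Section CollinearInput.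
Variables (R : realType) (n : nat) (s : seq nat).

Definition line_position (i : nat) : R :=
  if i == 0%N then 0 else (index i s).+1%:R.

Definition line_speed (i : nat) : R :=
  if i == 0%N then 1 else (n.+1).*2%:R^-1.

Definition line_input : 'I_(3 * n.+1) -> R := fun k =>
  let i := (k %/ 3)%N in
  match (k %% 3)%N with
  | 0 => line_position i
  | 1 => 0
  | _ => line_speed i
  end.

Definition line_touch (i j : nat) : R :=
  `|line_position i - line_position j| / (line_speed i + line_speed j).

Lemma cx_line_input i : (i < n.+1)%N -> cx line_input i = line_position i.
Proof.
move=> i_lt_n; have k_lt : (3 * i < 3 * n.+1)%N by lia.
rewrite /cx (coordE _ k_lt) /line_input /=.
by have [-> ->] : (3 * i %% 3 = 0 /\ 3 * i %/ 3 = i)%N by lia.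
Qed.

Lemma cy_line_input i : (i < n.+1)%N -> cy line_input i = 0.
Proof.
move=> i_lt_n; have k_lt : (3 * i + 1 < 3 * n.+1)%N by lia.
rewrite /cy (coordE _ k_lt) /line_input /=.
by have -> : ((3 * i + 1) %% 3 = 1)%N by lia.
Qed.

Lemma rate_line_input i : (i < n.+1)%N -> rate line_input i = line_speed i.
Proof.
move=> i_lt_n; have k_lt : (3 * i + 2 < 3 * n.+1)%N by lia.
rewrite /rate (coordE _ k_lt) /line_input /=.
by have [-> ->] : ((3 * i + 2) %% 3 = 2 /\ (3 * i + 2) %/ 3 = i)%N by lia.
Qed.

Lemma line_speed_gt0 i : 0 < line_speed i.
Proof. by rewrite /line_speed; case: ifP => _; rewrite ?invr_gt0 ?ltr0n. Qed.

Hypothesis s_perm : perm_eq s (iota 1 n).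

Lemma mem_line_order j : (j \in s) = (0 < j < n.+1)%N.
Proof. by rewrite (perm_mem s_perm) mem_iota add1n. Qed.

Lemma line_order_gt0 j : j \in s -> (0 < j)%N.
Proof. by rewrite mem_line_order => /andP[]. Qed.

Lemma line_touch0 j :
  (0 < j)%N -> line_touch 0 j = (index j s).+1%:R / (1 + (n.+1).*2%:R^-1).
Proof.
move=> j_gt0; rewrite /line_touch /line_position /line_speed eqxx !ifN_eq; try lia.
by rewrite sub0r normrN normr_nat.
Qed.

Lemma line_touch_dominant i j :
  (0 < i)%N -> (i < j < n.+1)%N -> line_touch 0 j <= line_touch i j.
Proof.
move=> i_gt0 ij; have [i_s j_s] : i \in s /\ j \in s by rewrite !mem_line_order; lia.
have index_lt k : k \in s -> ((index k s).+1 <= n)%N.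
  by rewrite -index_mem (perm_size s_perm) size_iota.
have eps_sum : (n.+1).*2%:R^-1 + (n.+1).*2%:R^-1 = (n.+1)%:R^-1 :> R.
  by rewrite -muln2 natrM invfM -splitr.
have t0j_le_n : line_touch 0 j <= n%:R.
  rewrite line_touch0; last lia.
  rewrite ler_pdivrMr ?ltr_wpDr ?invr_ge0 //.
  apply: (@le_trans _ _ n%:R); first by rewrite ler_nat index_lt.
  by rewrite ler_peMr ?lerDl ?invr_ge0.
apply: (le_trans t0j_le_n).
rewrite /line_touch /line_position /line_speed !ifN_eq; try lia.
rewrite eps_sum invrK -[n%:R]mul1r ler_pM ?ler_nat //.
apply: dist_natr_ge1; rewrite eqSS.
by apply: contraTneq ij => /index_inj -> //; rewrite ltnn.
Qed.

Lemma uniq_line_order : uniq s.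
Proof. by rewrite (perm_uniq s_perm) iota_uniq. Qed.

Lemma sorted_line_touch0 : sorted (fun a b => line_touch 0 a <= line_touch 0 b) s.
Proof.
apply: sub_in_sorted (allss s) (sorted_index uniq_line_order) => a b.
rewrite !mem_line_order => a_range b_range /= le_ab.
rewrite !line_touch0 ?ler_pM2r ?ler_nat ?invr_gt0 ?ltr_wpDr ?invr_ge0 //; lia.
Qed.

Lemma line_touch0_inj : {in s &, injective (line_touch 0)}.
Proof.
move=> a b a_s b_s; rewrite !line_touch0 ?line_order_gt0 //.
have eps_neq0 : (1 + (n.+1).*2%:R^-1)^-1 != 0 :> R.
  by rewrite invr_eq0 gt_eqF // ltr_wpDr ?invr_ge0.
move=> /(mulIf eps_neq0)/eqP; rewrite eqr_nat eqSS => /eqP; exact: index_inj.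
Qed.

Lemma line_input_elim_order (t : nat -> nat -> R) o :
  (forall i j, (i < n.+1)%N -> (j < n.+1)%N -> t i j = line_touch i j) ->
  is_elim_order t n.+1 o -> o = s.
Proof.
move=> t_line; have s_lt j : j \in s -> (j < n.+1)%N by rewrite mem_line_order => /andP[].
apply: elim_order_dominant s_perm _ _ _ => [i j i_gt0 ij||].
- by rewrite !t_line; [exact: line_touch_dominant | lia ..].
- apply: sub_in_sorted (allss s) sorted_line_touch0 => a b a_s b_s /=.
  by rewrite !t_line // s_lt.
- move=> a b a_s b_s; rewrite !t_line ?ltn0Sn ?s_lt //; exact: line_touch0_inj.
Qed.

End CollinearInput.

Section LowerBound.
Variable R : realType.

Definition collinear_touch
    (touch : forall n : nat, ('I_(3 * n) -> R) -> nat -> nat -> R) : Prop :=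
  forall n (x : 'I_(3 * n) -> R) i j, cy x i = 0 -> cy x j = 0 ->
    touch n x i j = `|cx x i - cx x j| / (rate x i + rate x j).

Variables (touch : forall n : nat, ('I_(3 * n) -> R) -> nat -> nat -> R)
  (touch_line : collinear_touch touch).

Lemma adt_run_line_input n (T : adt R (3 * n.+1) (seq nat)) s :
  computes_elim_order (@touch n.+1) T -> perm_eq s (iota 1 n) ->
  adt_run T (@line_input R n s) = s.
Proof.
move=> T_correct s_perm; apply: (line_input_elim_order s_perm); last first.
  by apply: T_correct => i i_lt; rewrite rate_line_input ?line_speed_gt0.
move=> i j i_lt j_lt.
by rewrite touch_line ?cy_line_input // !cx_line_input // !rate_line_input.
Qed.

Lemma fact_le_adt_depth n (T : adt R (3 * n.+1) (seq nat)) :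
  computes_elim_order (@touch n.+1) T -> (n`! <= 3 ^ adt_depth T)%N.
Proof.
move=> T_correct; rewrite -[n in n`!](size_iota 1) -size_permutations ?iota_uniq //.
apply: size_outputs_le_adt_depth (permutations_uniq _) _ => s.
by rewrite mem_permutations => s_perm; exists (@line_input R n s); apply: adt_run_line_input.
Qed.

Lemma elim_order_lower_bound_collinear : elim_order_lower_bound touch.
Proof.
move=> d; exists 8%:R^-1; first by rewrite invr_gt0 ltr0n.
exists 8%N => -[|n] // n_ge8 T _ T_correct.
have := fact_le_exp3_trunc_log (fact_le_adt_depth T_correct).
have : (3 <= trunc_log 2 n.+1)%N by apply: trunc_log_max.
by rewrite mulrC ler_pdivrMr ?ltr0n // -natrM ler_nat; nia.
Qed.

End LowerBound.

Theorem theorem19 (R : realType) :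
  elim_order_lower_bound (@disk_touch R) /\
  elim_order_lower_bound (@square_touch R).
Proof.
split; apply: elim_order_lower_bound_collinear => n x i j yi yj.
- by rewrite /disk_touch yi yj subrr expr0n addr0 sqrtr_sqr.
- by rewrite /square_touch yi yj subrr normr0 max_l.
Qed.
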